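(* Let $B\colon\mathbf{Set}\to\mathbf{Set}$ be a functor, $\Lambda$ a set and $(\tau_\lambda\colon B\mathbb{R}\to\mathbb{R})_{\lambda\in\Lambda}$ functions such that, for every set $Y$: (1) if $k\colon Y\to\mathbb{R}$ is bounded then $\tau_\lambda\circ Bk$ is bounded for each $\lambda$; (2) if $k_i\colon Y\to\mathbb{R}$ converges uniformly to $h$ then $\tau_\lambda\circ Bk_i$ converges uniformly to $\tau_\lambda\circ Bh$ for each $\lambda$. Let $X$ be a set and $S\subseteq\mathbf{Set}(X,\mathbb{R})$ such that every function in $S$ is bounded, the constant function $1$ is in $S$, and $S$ is closed under pointwise $\min$, $k\mapsto r+k$ and $k\mapsto rk$ for every $r\in\mathbb{R}$. Then $S$ is approximating: for every $h\colon X\to\mathbb{R}$ uniformly continuous w.r.t. $\mathscr{U}(S)$ and every $\lambda\in\Lambda$, the function $\tau_\lambda\circ Bh\colon BX\to\mathbb{R}$ is uniformly continuous w.r.t. the uniformity $\mathscr{U}(\{\tau_{\lambda'}\circ Bk\mid k\in S,\lambda'\in\Lambda\})$ on $BX$.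
   Context: For a set $Y$ and a family $F$ of functions $Y\to\mathbb{R}$, $\mathscr{U}(F)$ denotes the coarsest uniformity on $Y$ making every $f\in F$ uniformly continuous into $\mathbb{R}$ with the uniformity induced by the Euclidean metric. *)

From mathcomp Require Import all_boot all_order all_algebra.
From mathcomp Require Import reals.
Set Implicit Arguments. Unset Strict Implicit. Unset Printing Implicit Defensive.
Import Order.TTheory GRing.Theory Num.Theory.
Local Open Scope ring_scope.

(* The uniformity U(F) on Y: the coarsest uniformity making every f in F
   uniformly continuous into R (Euclidean uniformity), i.e. the uniformity
   generated by the subbase { (x,y) | |f x - f y| < e }, f in F, e > 0.
   E is an entourage iff it contains a finite intersection of subbasic
   entourages. *)
Definition unifF (R : realType) (Y : Type) (F : (Y -> R) -> Prop)
  : (Y * Y -> Prop) -> Prop :=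
  fun E => exists (n : nat) (fs : 'I_n -> (Y -> R)) (es : 'I_n -> R),
    (forall i, F (fs i)) /\ (forall i, 0 < es i) /\
    (forall x y : Y, (forall i, `|fs i x - fs i y| < es i) -> E (x, y)).

Definition unif_cont (R : realType) (Y : Type) (U : (Y * Y -> Prop) -> Prop)
  (h : Y -> R) : Prop :=
  forall e : R, 0 < e -> U (fun p => `|h p.1 - h p.2| < e).

Definition bounded_fun (R : realType) (Y : Type) (k : Y -> R) : Prop :=
  exists M : R, forall y, `|k y| <= M.

Definition unif_conv (R : realType) (Y : Type) (k : nat -> Y -> R) (h : Y -> R)
  : Prop :=
  forall e : R, 0 < e -> exists N : nat, forall i, (N <= i)%N ->
    forall y, `|k i y - h y| < e.

(* Because S is a lattice of bounded functions that contains the constants,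
   every U(S)-uniformly continuous h is a uniform limit of members of S.
   Indeed h is controlled by finitely many g_i in S: if |g_i x - g_i y| < r_i
   for all i then |h x - h y| < e.  The pseudometric
   D(x, y) = max_i |g_i x - g_i y| / r_i admits a finite e/C-net (y_t)
   because the g_i are bounded, and the function
   min_t (h(y_t) + e + C D(y_t, -)), which lies in S, is within 3e of h once
   C exceeds twice the sup norm of h.  By hypothesis (2), uniform convergence
   of k_i to h is transported to uniform convergence of tau o Bk_i to tau o Bh,
   and a uniform limit of members of a family F is U(F)-uniformly continuous. *)

From mathcomp Require Import all_boot all_order all_algebra.
From mathcomp Require Import reals lra.
From Stdlib Require Import ClassicalEpsilon FunctionalExtensionality.
Import Order.TTheory GRing.Theory Num.Theory.
Set Implicit Arguments. Unset Strict Implicit.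
Local Open Scope ring_scope.

Lemma dist_lt1_of_eq_truncn (R : realType) (a b : R) :
  0 <= a -> 0 <= b -> Num.truncn a = Num.truncn b -> `|a - b| < 1.
Proof.
move=> a0 b0 eq_ab; have /andP[a1 a2] := truncn_itv a0.
have /andP[b1 b2] := truncn_itv b0.
rewrite eq_ab -natr1 in a1 a2; rewrite -natr1 in b2.
by rewrite ltr_distl; apply/andP; split; lra.
Qed.

(* Points with the same vector of truncated coordinates (g_i x + M_i) / r_i
   are close; there are finitely many such vectors, and we pick one point
   for each vector that is attained. *)
Lemma finite_net (R : realType) (X : Type) (I : finType)
    (g : I -> X -> R) (r : I -> R) :
  (forall i, bounded_fun (g i)) -> (forall i, 0 < r i) ->
  exists (T : finType) (ys : T -> X),
    forall x, exists t, forall i, `|g i x - g i (ys t)| < r i.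
Proof.
move=> gb r0; have [M gM] := fin_all_exists gb.
pose K := (\max_(i : I) Num.truncn (2 * M i / r i))%N.
pose code x : {ffun I -> 'I_K.+1} :=
  [ffun i => inord (Num.truncn ((g i x + M i) / r i))].
have coord_ge0 i x : 0 <= (g i x + M i) / r i.
  have := gM i x; rewrite ler_norml => /andP[? _].
  by apply: divr_ge0; [lra | exact: ltW].
have truncn_small i x : (Num.truncn ((g i x + M i) / r i) < K.+1)%N.
  rewrite ltnS; apply: leq_trans (leq_bigmax i); apply: le_truncn.
  by have := gM i x; rewrite ler_norml ler_pM2r ?invr_gt0 // => /andP[_ ?]; lra.
have code_close x y : code x = code y -> forall i, `|g i x - g i y| < r i.
  move=> /ffunP eq_xy i; have := congr1 val (eq_xy i); rewrite !ffunE /=.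
  rewrite !inordK // => /(dist_lt1_of_eq_truncn (coord_ge0 i x) (coord_ge0 i y)).
  rewrite -mulrBl opprD addrACA subrr addr0 normrM.
  by rewrite [`|(r i)^-1|]gtr0_norm ?invr_gt0 // ltr_pdivrMr // mul1r.
have [[x0]|noX] := classic (inhabited X); last first.
  by exists void, (of_void X) => x; case: noX.
have [ys ysP] : exists ys : {ffun I -> 'I_K.+1} -> X,
    forall c, (exists x, code x = c) -> code (ys c) = c.
  apply: (@fin_all_exists _ (fun _ => X)
           (fun c y => (exists x, code x = c) -> code y = c)).
  move=> c; have [[x cx]|nc] := classic (exists x, code x = c).
    by exists x.
  by exists x0 => /nc.
exists {ffun I -> 'I_K.+1}, ys => x; exists (code x).
by apply: code_close; rewrite ysP //; exists x.
Qed.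

Lemma unif_cont_unifF_bounded (R : realType) (Y : Type) (F : (Y -> R) -> Prop)
    (h : Y -> R) :
  (forall f, F f -> bounded_fun f) -> unif_cont (unifF F) h -> bounded_fun h.
Proof.
move=> Fb hu; have [n [f [r [Ff [r0 close]]]]] := hu 1 ltr01.
have [T [ys net]] := finite_net (fun i => Fb _ (Ff i)) r0.
exists (\big[Num.max/0]_(t : T) `|h (ys t)| + 1) => x.
have [t /close /= hxy] := net x.
have := le_bigmax 0 (fun t => `|h (ys t)|) t.
have := ler_normD (h (ys t)) (h x - h (ys t)); rewrite addrC subrK.
lra.
Qed.

Lemma unif_cont_unifF_of_approx (R : realType) (Y : Type)
    (F : (Y -> R) -> Prop) (g : Y -> R) :
  (forall e, 0 < e -> exists f, F f /\ forall y, `|f y - g y| < e) ->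
  unif_cont (unifF F) g.
Proof.
move=> approx e e0; have [f [Ff fg]] := approx (e / 3) (divr_gt0 e0 (ltr0Sn _ 2)).
exists 1%N, (fun _ => f), (fun _ => e / 3).
split=> [//|]; split=> [_|x y /(_ ord0) /=]; first by rewrite divr_gt0.
move: (fg x) (fg y); rewrite !ltr_distl => /andP[? ?] /andP[? ?] /andP[? ?].
by apply/andP; split; lra.
Qed.

Lemma approx_unif_conv (R : realType) (Y : Type) (P : (Y -> R) -> Prop)
    (h : Y -> R) :
  (forall e, 0 < e -> exists k, P k /\ forall y, `|k y - h y| < e) ->
  exists k : nat -> Y -> R, (forall i, P (k i)) /\ unif_conv k h.
Proof.
move=> approx; have inv_gt0 (i : nat) : 0 < (i.+1%:R : R)^-1 by rewrite invr_gt0.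
have [k kP] := choice (fun i k => P k /\ forall y, `|k y - h y| < (i.+1%:R)^-1)
  (fun i => approx _ (inv_gt0 i)).
exists k; split => [i|e e0]; first by case: (kP i).
exists (Num.truncn e^-1) => i le_i y; apply: lt_trans (proj2 (kP i) y) _.
by rewrite invf_plt ?posrE ?ltr0Sn // -truncn_le_nat.
Qed.

Section LatticeOfBoundedFunctions.
Variables (R : realType) (X : Type) (S : (X -> R) -> Prop).
Hypotheses (Sbdd : forall k, S k -> bounded_fun k) (S1 : S (fun _ => 1))
  (Smin : forall k1 k2, S k1 -> S k2 -> S (fun x => Num.min (k1 x) (k2 x)))
  (Sadd : forall (r : R) k, S k -> S (fun x => r + k x))
  (Smul : forall (r : R) k, S k -> S (fun x => r * k x)).

Lemma S_ext f g : S f -> f =1 g -> S g.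
Proof. by move=> Sf /functional_extensionality <-. Qed.

Lemma S_const c : S (fun _ => c).
Proof. by apply: S_ext (Sadd c (Smul 0 S1)) _ => x; rewrite mul0r addr0. Qed.

Lemma S_max f g : S f -> S g -> S (fun x => Num.max (f x) (g x)).
Proof.
move=> Sf Sg; apply: S_ext (Smul (-1) (Smin (Smul (-1) Sf) (Smul (-1) Sg))) _.
move=> x /=; case: (leP (f x) (g x)); case: (leP (-1 * f x) (-1 * g x)).
all: by move=> ? ?; lra.
Qed.

Lemma S_dist f c : S f -> S (fun x => `|f x - c|).
Proof.
move=> Sf.
apply: S_ext (S_max (Sadd (- c) (Smul 1 Sf)) (Sadd c (Smul (-1) Sf))) _.
by move=> x /=; rewrite -maxrN mul1r mulN1r opprB addrC.
Qed.

Lemma S_bigmin (I : Type) (s : seq I) c (F : I -> X -> R) :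
  (forall i, S (F i)) -> S (fun x => \big[Num.min/c]_(i <- s) F i x).
Proof.
move=> SF; elim: s => [|i s IHs].
  by apply: S_ext (S_const c) _ => x; rewrite big_nil.
by apply: S_ext (Smin (SF i) IHs) _ => x; rewrite big_cons.
Qed.

Lemma S_bigmax (I : Type) (s : seq I) c (F : I -> X -> R) :
  (forall i, S (F i)) -> S (fun x => \big[Num.max/c]_(i <- s) F i x).
Proof.
move=> SF; elim: s => [|i s IHs].
  by apply: S_ext (S_const c) _ => x; rewrite big_nil.
by apply: S_ext (S_max (SF i) IHs) _ => x; rewrite big_cons.
Qed.

Lemma S_approx_of_entourage (I : finType) (g : I -> X -> R) (r : I -> R)
    (h : X -> R) (M e : R) :
  (forall i, S (g i)) -> (forall i, 0 < r i) -> (forall x, `|h x| <= M) ->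
  0 < e ->
  (forall x y, (forall i, `|g i x - g i y| < r i) -> `|h x - h y| < e) ->
  exists k, S k /\ forall x, h x <= k x < h x + 3 * e.
Proof.
move=> Sg r0 hM e0 close.
have normM_ge0 := normr_ge0 M; have M_le_normM := ler_norm M.
(* C exceeds the oscillation of h, so the terms with D >= 1 never undercut h. *)
pose C := 2 * `|M| + e; have C0 : 0 < C by rewrite /C; lra.
pose eta := e / C; have eta0 : 0 < eta by rewrite divr_gt0.
have eta_le1 : eta <= 1 by rewrite ler_pdivrMr // mul1r /C; lra.
have C_eta : C * eta = e by rewrite mulrC divfK // gt_eqF.
pose D y x := \big[Num.max/0]_(i : I) ((r i)^-1 * `|g i x - g i y|).
have D_lt y x c : 0 < c -> (forall i, `|g i x - g i y| < c * r i) -> D y x < c.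
  by move=> c0 gc; apply: bigmax_lt => // i _; rewrite mulrC ltr_pdivrMr.
have lt_D1 y x : D y x < 1 -> forall i, `|g i x - g i y| < r i.
  move/bigmax_ltP => [_ lt1] i.
  by have := lt1 i isT; rewrite mulrC ltr_pdivrMr // mul1r.
have [T [ys net]] :=
  finite_net (fun i => Sbdd (Sg i)) (fun i => mulr_gt0 eta0 (r0 i)).
exists (fun x => \big[Num.min/M]_(t : T) (h (ys t) + e + C * D (ys t) x)); split.
  apply: S_bigmin => t; apply: Sadd; apply: Smul.
  by apply: S_bigmax => i; apply: Smul; apply: S_dist.
move=> x; have := hM x; rewrite ler_norml => /andP[hx_ge hx_le].
apply/andP; split.
  apply: le_bigmin => // t _.
  have := hM (ys t); rewrite ler_norml => /andP[hy_ge _].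
  have [/lt_D1 /close | D_ge1] := ltP (D (ys t) x) 1.
    have := mulr_ge0 (ltW C0) (bigmax_ge_id _ _ _ _ : 0 <= D (ys t) x).
    by rewrite ltr_distl => ? /andP[? ?]; lra.
  by have := ler_wpM2l (ltW C0) D_ge1; rewrite mulr1 /C; lra.
have [t xt] := net x; apply: le_lt_trans (bigmin_le _ t _) _.
have CD : C * D (ys t) x < e.
  by rewrite -[X in _ < X]C_eta ltr_pM2l //; exact: D_lt eta0 xt.
have r_le i : eta * r i <= r i := ler_piMl (ltW (r0 i)) eta_le1.
have := close x (ys t) (fun i => lt_le_trans (xt i) (r_le i)).
by rewrite ltr_distl => /andP[? ?]; lra.
Qed.

Lemma S_approx h : unif_cont (unifF S) h ->
  forall e, 0 < e -> exists k, S k /\ forall x, `|k x - h x| < e.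
Proof.
move=> hu e e0; have [M hM] := unif_cont_unifF_bounded Sbdd hu.
have e3_gt0 : 0 < e / 3 by rewrite divr_gt0.
have [n [g [r [Sg [r0 close]]]]] := hu (e / 3) e3_gt0.
have [k [Sk hk]] := S_approx_of_entourage Sg r0 hM e3_gt0 close.
exists k; split=> // x; have /andP[? ?] := hk x.
by rewrite ltr_distl; apply/andP; split; lra.
Qed.

End LatticeOfBoundedFunctions.

Theorem mainTheorem12 (R : realType)
  (B : Type -> Type) (Bmap : forall X Y : Type, (X -> Y) -> B X -> B Y)
  (Bmap_id : forall (X : Type) (b : B X), Bmap X X (fun x => x) b = b)
  (Bmap_comp : forall (X Y Z : Type) (f : X -> Y) (g : Y -> Z) (b : B X),
      Bmap X Z (fun x => g (f x)) b = Bmap Y Z g (Bmap X Y f b))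
  (Lambda : Type) (tau : Lambda -> B R -> R)
  (H1 : forall (Y : Type) (k : Y -> R), bounded_fun k ->
      forall l, bounded_fun (fun b => tau l (Bmap Y R k b)))
  (H2 : forall (Y : Type) (k : nat -> Y -> R) (h : Y -> R), unif_conv k h ->
      forall l, unif_conv (fun i b => tau l (Bmap Y R (k i) b))
                          (fun b => tau l (Bmap Y R h b)))
  (X : Type) (S : (X -> R) -> Prop)
  (Sbdd : forall k, S k -> bounded_fun k)
  (S1 : S (fun _ => 1))
  (Smin : forall k1 k2, S k1 -> S k2 -> S (fun x => Num.min (k1 x) (k2 x)))
  (Sadd : forall (r : R) k, S k -> S (fun x => r + k x))
  (Smul : forall (r : R) k, S k -> S (fun x => r * k x)) :
  forall h : X -> R, unif_cont (unifF S) h ->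
  forall l : Lambda,
    unif_cont
      (unifF (fun g : B X -> R => exists (k : X -> R) (l' : Lambda),
                 S k /\ g = (fun b => tau l' (Bmap X R k b))))
      (fun b => tau l (Bmap X R h b)).
Proof.
move=> h hu l; apply: unif_cont_unifF_of_approx => e e0.
have [k [Sk kh]] := approx_unif_conv (S_approx Sbdd S1 Smin Sadd Smul hu).
have [N kNh] := H2 X k h kh l e e0.
exists (fun b => tau l (Bmap X R (k N) b)); split; last exact: kNh N (leqnn N).
by exists (k N), l.
Qed.
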